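(* For positive integers $D_1,D_2$, integers $a,b$ with $(a,D_1)=(b,D_2)=1$, and integers $u,t$, \[ \widehat S(a,u,t,b;D_1,D_2)=\widehat S(b,t,u,a;D_2,D_1). \]
   Context: Notation: $e(x)=e^{2\pi ix}$. For integers $m_1,m_2,n_1,n_2$ and positive integers $D_1,D_2$, the $GL_3$ Kloosterman sum is \[ S(m_1,m_2,n_1,n_2;D_1,D_2)=\sum e\Big(\frac{m_1B_1+n_1(Y_1D_2-Z_1B_2)}{D_1}\Big)e\Big(\frac{m_2B_2+n_2(Y_2D_1-Z_2B_1)}{D_2}\Big), \] the sum over $B_1,C_1 \bmod D_1$, $B_2,C_2\bmod D_2$ with $\gcd(B_1,C_1,D_1)=\gcd(B_2,C_2,D_2)=1$ and $D_1C_2+B_1B_2+C_1D_2\equiv 0\pmod{D_1D_2}$, where $Y_1B_1+Z_1C_1\equiv 1\pmod{D_1}$, $Y_2B_2+Z_2C_2\equiv1\pmod{D_2}$ (independent of choices). For $(a,D_1)=(b,D_2)=1$, \[ \widehat S(a,u,t,b;D_1,D_2)=\frac{1}{D_1D_2}\sum_{x\bmod D_1}\sum_{y\bmod D_2}S(a,y,x,b;D_1,D_2)\,e\Big(\frac{-xt}{D_1}\Big)e\Big(\frac{-yu}{D_2}\Big). \] *)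

From HB Require Import structures.
From mathcomp Require Import all_boot all_order all_algebra.
From mathcomp Require Import reals trigo.
From mathcomp Require Import complex.
Set Implicit Arguments. Unset Strict Implicit. Unset Printing Implicit Defensive.
Import Order.TTheory GRing.Theory Num.Theory.
Local Open Scope ring_scope.
Local Open Scope complex_scope.

Section GL3.
Variable R : realType.

Definition ee (x : R) : R[i] := (cos (2 * pi * x) +i* sin (2 * pi * x))%C.

Definition eq_frac (k : int) (D : nat) : R[i] := ee (k%:~R / D%:R).

Definition coprime3 (B C D : nat) : bool := gcdn (gcdn B C) D == 1%N.

(* a choice of (Y, Z) mod D with Y B + Z C = 1 (mod D); any choice is fine
   since the sum is independent of it; default (0,0) if none exists *)
Definition YZ (D : nat) (B C : 'I_D) : int * int :=
  match [pick p : 'I_D * 'I_D |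
           ((p.1 : nat)%:Z * (B : nat)%:Z + (p.2 : nat)%:Z * (C : nat)%:Z
              == 1 %[mod (D : nat)%:Z])%Z] with
  | Some p => ((p.1 : nat)%:Z, (p.2 : nat)%:Z)
  | None => (0, 0)
  end.

Definition Kl3 (m1 m2 n1 n2 : int) (D1 D2 : nat) : R[i] :=
  \sum_(B1 : 'I_D1) \sum_(C1 : 'I_D1) \sum_(B2 : 'I_D2) \sum_(C2 : 'I_D2)
    if [&& coprime3 B1 C1 D1, coprime3 B2 C2 D2 &
          ((D1%:Z * (C2 : nat)%:Z + (B1 : nat)%:Z * (B2 : nat)%:Z
             + (C1 : nat)%:Z * D2%:Z) == 0 %[mod (D1 * D2)%N%:Z])%Z]
    then
      let Y1 := (YZ B1 C1).1 in let Z1 := (YZ B1 C1).2 in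
      let Y2 := (YZ B2 C2).1 in let Z2 := (YZ B2 C2).2 in
      eq_frac (m1 * (B1 : nat)%:Z + n1 * (Y1 * D2%:Z - Z1 * (B2 : nat)%:Z)) D1
      * eq_frac (m2 * (B2 : nat)%:Z + n2 * (Y2 * D1%:Z - Z2 * (B1 : nat)%:Z)) D2
    else 0.

Definition Shat (a u t b : int) (D1 D2 : nat) : R[i] :=
  ((D1 * D2)%N%:R)^-1 *
  \sum_(x : 'I_D1) \sum_(y : 'I_D2)
     Kl3 a (y : nat)%:Z (x : nat)%:Z b D1 D2
     * eq_frac (- ((x : nat)%:Z * t)) D1 * eq_frac (- ((y : nat)%:Z * u)) D2.

End GL3.

(* Let (Y1, Z1) and (Y2, Z2) be Bezout pairs of the two blocks of an index, and put
   beta1 = Y2 D1 - Z2 B1, beta2 = Y1 D2 - Z1 B2, the quantities in the exponentials of S.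
   Modulo D2, the Plucker relation makes beta1 the unique solution x of B2 x = D1 and
   C2 x = -B1, so it does not depend on the Bezout pair; likewise for beta2 modulo D1.
   Reducing (beta1, Z1 + w2 beta1) modulo D2 and (beta2, Z2 + w1 beta2) modulo D1, where
   w1 and w2 are the quotients of beta1 by D2 and of beta2 by D1, gives an index
   (B1', C1', B2', C2') of S(n2, n1, m2, m1; D2, D1).
   The congruences characterizing it ([kl_dual]) involve only the two tuples and are
   symmetric in them, so the map is an involution between the two index sets, and it
   exchanges the two exponentials: S(m1, m2, n1, n2; D1, D2) = S(n2, n1, m2, m1; D2, D1).
   The identity for the Fourier transform follows by exchanging the two summations. *)

From HB Require Import structures.
From mathcomp Require Import all_boot all_order all_algebra.
From mathcomp Require Import reals trigo.
From mathcomp Require Import complex.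
From mathcomp Require Import ring.
Import Order.TTheory GRing.Theory Num.Theory.
Local Open Scope ring_scope.
Set Implicit Arguments. Unset Strict Implicit.

Lemma periodicz (U V : zmodType) (f : U -> V) (T : U) :
  periodic f T -> forall (a : U) (j : int), f (a + T *~ j) = f a.
Proof.
move=> hf a [n|n]; first by rewrite -pmulrn periodicn.
rewrite NegzE mulrNz -pmulrn.
by have := periodicn hf n.+1 (a - T *+ n.+1); rewrite subrK => ->.
Qed.

Lemma ee_addz (R : realType) (x : R) (j : int) : ee (x + j%:~R) = ee x.
Proof.
rewrite /ee; have -> : 2 * pi * (x + j%:~R) = 2 * pi * x + (pi *+ 2) *~ j :> R.
  by rewrite -mulrzr mulrDr -mulr_natl; ring.
by rewrite (periodicz (@cosD2pi R)) (periodicz (@sinD2pi R)).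
Qed.

Lemma eq_frac_congr (R : realType) (D : nat) (k k' : int) : (0 < D)%N ->
  (D%:Z %| k - k')%Z -> eq_frac R k D = eq_frac R k' D.
Proof.
move=> hD /dvdzP[j hj].
have -> : k = k' + j * D%:Z by rewrite -hj; ring.
have D_neq0 : D%:Z%:~R != 0 :> R by rewrite intr_eq0 -lt0n.
by rewrite /eq_frac rmorphD rmorphM /= mulrDl -mulrA mulfV // mulr1 ee_addz.
Qed.

Lemma dvdz_modz_sub (d m : int) : (d %| (m %% d)%Z - m)%Z.
Proof. by rewrite -eqz_mod_dvd modz_mod. Qed.

Lemma ltn_absz_modz (D : nat) (x : int) : (0 < D)%N -> (`|(x %% D%:Z)%Z| < D)%N.
Proof.
move=> hD; have D_gt0 : 0 < D%:Z by rewrite ltz_nat.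
by rewrite -ltz_nat gez0_abs ?modz_ge0 ?ltz_pmod // gt_eqF.
Qed.

Definition ord_modz (D : nat) (hD : (0 < D)%N) (x : int) : 'I_D :=
  Ordinal (ltn_absz_modz x hD).

Lemma ord_modzE (D : nat) (hD : (0 < D)%N) (x : int) : (ord_modz hD x)%:Z = (x %% D%:Z)%Z.
Proof. by rewrite /= gez0_abs // modz_ge0 // gt_eqF // ltz_nat. Qed.

Lemma ord_inj_dvdz (D : nat) (i j : 'I_D) : (D%:Z %| i%:Z - j%:Z)%Z -> i = j.
Proof.
have range (k : 'I_D) : 0 <= k%:Z < D%:Z by rewrite lez_nat ltz_nat ltn_ord.
rewrite -eqz_mod_dvd !modz_small // => /eqP[] ij; exact: val_inj.
Qed.

Lemma coprime3_bezout (D B C : nat) (Y Z : int) :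
  (D%:Z %| Y * B%:Z + Z * C%:Z - 1)%Z -> coprime3 B C D.
Proof.
move=> e; rewrite /coprime3 -dvdn1.
set g := gcdn (gcdn B C) D.
have dvd_g (n : nat) : (g %| n)%N -> (g%:Z %| n%:Z)%Z by rewrite dvdzE.
have gB : (g %| B)%N by rewrite (dvdn_trans (dvdn_gcdl _ _) (dvdn_gcdl _ _)).
have gC : (g %| C)%N by rewrite (dvdn_trans (dvdn_gcdl _ _) (dvdn_gcdr _ _)).
have gD : (g %| D)%N by rewrite dvdn_gcdr.
have : (g%:Z %| (Y * B%:Z + Z * C%:Z) - (Y * B%:Z + Z * C%:Z - 1))%Z.
  apply: rpredB; last exact: dvdz_trans (dvd_g _ gD) e.
  by apply: rpredD; apply: dvdz_mull; apply: dvd_g.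
by have -> : Y * B%:Z + Z * C%:Z - (Y * B%:Z + Z * C%:Z - 1) = 1 by ring.
Qed.

Lemma YZ_bezout (D : nat) (B C : 'I_D) : coprime3 B C D ->
  (D%:Z %| (YZ B C).1 * B%:Z + (YZ B C).2 * C%:Z - 1)%Z.
Proof.
move=> cop; rewrite /YZ; case: pickP => [p|none]; first by rewrite /= eqz_mod_dvd.
exfalso; have hD : (0 < D)%N by apply: leq_ltn_trans (ltn_ord B).
have [u [v uv]] := Bezoutz B%:Z C%:Z.
have [u' [v' uv']] := Bezoutz (gcdz B%:Z C%:Z) D%:Z.
have g1 : gcdz (gcdz B%:Z C%:Z) D%:Z = 1 by rewrite /gcdz /= (eqP cop).
move/negbT/negP: (none (ord_modz hD (u' * u), ord_modz hD (u' * v))); apply.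
rewrite /= eqz_mod_dvd !(ord_modzE hD).
have -> : ((u' * u) %% D%:Z)%Z * B%:Z + ((u' * v) %% D%:Z)%Z * C%:Z - 1 =
  (((u' * u) %% D%:Z)%Z - u' * u) * B%:Z + (((u' * v) %% D%:Z)%Z - u' * v) * C%:Z - v' * D%:Z
  + (u' * (u * B%:Z + v * C%:Z) + v' * D%:Z - 1) by ring.
rewrite uv uv' g1 subrr addr0.
apply: rpredB; last exact: dvdz_mull (dvdzz _).
by apply: rpredD; apply: dvdz_mulr; apply: dvdz_modz_sub.
Qed.

Lemma dvdz_bezout_cancel (D B C Y Z d : int) :
  (D %| Y * B + Z * C - 1)%Z -> (D %| B * d)%Z -> (D %| C * d)%Z -> (D %| d)%Z.
Proof.
move=> e hB hC.
have -> : d = Y * (B * d) + Z * (C * d) - d * (Y * B + Z * C - 1) by ring.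
by apply: rpredB; [apply: rpredD|]; apply: dvdz_mull.
Qed.

Lemma bezout_solve (D E A B C Y Z : int) :
  (D %| Y * B + Z * C - 1)%Z -> (D %| E * C + A * B)%Z ->
  (D %| B * (Y * E - Z * A) - E)%Z /\ (D %| C * (Y * E - Z * A) + A)%Z.
Proof.
move=> e p; split.
  have -> : B * (Y * E - Z * A) - E = E * (Y * B + Z * C - 1) - Z * (E * C + A * B) by ring.
  by apply: rpredB; apply: dvdz_mull.
have -> : C * (Y * E - Z * A) + A = Y * (E * C + A * B) - A * (Y * B + Z * C - 1) by ring.
by apply: rpredB; apply: dvdz_mull.
Qed.

Lemma bezout_solve_unique (D E A B C Y Z x : int) :
  (D %| Y * B + Z * C - 1)%Z -> (D %| E * C + A * B)%Z ->
  (D %| B * x - E)%Z -> (D %| C * x + A)%Z -> (D %| (Y * E - Z * A) - x)%Z.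
Proof.
move=> e p hB hC; have [hB' hC'] := bezout_solve e p.
apply: (dvdz_bezout_cancel e).
- have -> : B * (Y * E - Z * A - x) = (B * (Y * E - Z * A) - E) - (B * x - E) by ring.
  exact: rpredB.
- have -> : C * (Y * E - Z * A - x) = (C * (Y * E - Z * A) + A) - (C * x + A) by ring.
  exact: rpredB.
Qed.

Definition kl_half (D1 D2 B1 B2 C2 B1' C1' B2' : int) : Prop :=
  [/\ (D2 %| B2 * B1' - D1)%Z, (D2 %| C2 * B1' + B1)%Z, (D2 %| B2 * C1' + B2')%Z
    & (D1 * D2 %| D1 * C2 * C1' - B1 * B2' + D2)%Z].

Definition kl_dual (D1 D2 B1 C1 B2 C2 B1' C1' B2' C2' : int) : Prop :=
  kl_half D1 D2 B1 B2 C2 B1' C1' B2' /\ kl_half D2 D1 B2 B1 C1 B2' C2' B1'.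

Lemma kl_half_swap (E F a b c x y z : int) :
  kl_half E F a b c x y z -> kl_half E F z x y b c a.
Proof.
case=> h1 h2 h3 h4; split; [by rewrite mulrC | by rewrite mulrC | by rewrite mulrC |].
by have -> : E * y * c - z * a + F = E * c * y - a * z + F by ring.
Qed.

Lemma kl_dual_sym (D1 D2 B1 C1 B2 C2 B1' C1' B2' C2' : int) :
  kl_dual D1 D2 B1 C1 B2 C2 B1' C1' B2' C2' -> kl_dual D2 D1 B1' C1' B2' C2' B1 C1 B2 C2.
Proof. by case=> h1 h2; split; apply: kl_half_swap. Qed.

Lemma kl_half_beta (D1 D2 B1 B2 C2 Y2 Z2 B1' C1' B2' : int) :
  (D2 %| Y2 * B2 + Z2 * C2 - 1)%Z -> (D2 %| D1 * C2 + B1 * B2)%Z ->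
  kl_half D1 D2 B1 B2 C2 B1' C1' B2' -> (D2 %| (Y2 * D1 - Z2 * B1) - B1')%Z.
Proof. by move=> e p [h1 h2 _ _]; apply: (bezout_solve_unique e p). Qed.

Lemma kl_half_uniqB (D1 D2 B1 B2 C2 Y2 Z2 x y z x' y' z' : int) :
  (D2 %| Y2 * B2 + Z2 * C2 - 1)%Z ->
  kl_half D1 D2 B1 B2 C2 x y z -> kl_half D1 D2 B1 B2 C2 x' y' z' -> (D2 %| x - x')%Z.
Proof.
move=> e [h1 h2 _ _] [h1' h2' _ _]; apply: (dvdz_bezout_cancel e).
- have -> : B2 * (x - x') = (B2 * x - D1) - (B2 * x' - D1) by ring.
  exact: rpredB.
- have -> : C2 * (x - x') = (C2 * x + B1) - (C2 * x' + B1) by ring.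
  exact: rpredB.
Qed.

Lemma kl_half_uniqC (D1 D2 B1 B2 C2 Y2 Z2 x y z x' y' : int) :
  D1 != 0 -> (D2 %| Y2 * B2 + Z2 * C2 - 1)%Z ->
  kl_half D1 D2 B1 B2 C2 x y z -> kl_half D1 D2 B1 B2 C2 x' y' z -> (D2 %| y - y')%Z.
Proof.
move=> nz e [_ _ h3 h4] [_ _ h3' h4']; apply: (dvdz_bezout_cancel e).
- have -> : B2 * (y - y') = (B2 * y + z) - (B2 * y' + z) by ring.
  exact: rpredB.
- rewrite -(@dvdz_mul2l D1) //.
  have -> : D1 * (C2 * (y - y')) =
    (D1 * C2 * y - B1 * z + D2) - (D1 * C2 * y' - B1 * z + D2) by ring.
  exact: rpredB.
Qed.

Lemma plucker_swap (D1 D2 B1 C1 B2 C2 : int) :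
  (D1 * D2 %| D1 * C2 + B1 * B2 + C1 * D2)%Z -> (D2 * D1 %| D2 * C1 + B2 * B1 + C2 * D1)%Z.
Proof.
have -> : D2 * C1 + B2 * B1 + C2 * D1 = D1 * C2 + B1 * B2 + C1 * D2 by ring.
by rewrite [D2 * D1]mulrC.
Qed.

Lemma plucker_modr (D1 D2 B1 C1 B2 C2 : int) :
  (D1 * D2 %| D1 * C2 + B1 * B2 + C1 * D2)%Z -> (D2 %| D1 * C2 + B1 * B2)%Z.
Proof.
move=> p; have -> : D1 * C2 + B1 * B2 = (D1 * C2 + B1 * B2 + C1 * D2) - C1 * D2 by ring.
by apply: rpredB; [apply: dvdz_trans p; apply: dvdz_mull | apply: dvdz_mull].
Qed.

Section Reduction.
Variables D1 D2 B1 C1 B2 C2 Y1 Z1 Y2 Z2 w1 w2 B1' C1' B2' C2' : int.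
Hypothesis bezout1 : (D1 %| Y1 * B1 + Z1 * C1 - 1)%Z.
Hypothesis bezout2 : (D2 %| Y2 * B2 + Z2 * C2 - 1)%Z.
Hypothesis plucker : (D1 * D2 %| D1 * C2 + B1 * B2 + C1 * D2)%Z.
Hypothesis B1'E : B1' = (Y2 * D1 - Z2 * B1) - w1 * D2.
Hypothesis B2'E : B2' = (Y1 * D2 - Z1 * B2) - w2 * D1.
Hypothesis C1'E : (D2 %| C1' - (Z1 + w2 * (Y2 * D1 - Z2 * B1)))%Z.
Hypothesis C2'E : (D1 %| C2' - (Z2 + w1 * (Y1 * D2 - Z1 * B2)))%Z.

Lemma kl_half_reduction : kl_half D1 D2 B1 B2 C2 B1' C1' B2'.
Proof.
set beta1 := Y2 * D1 - Z2 * B1.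
have [bB bC] := bezout_solve bezout2 (plucker_modr plucker).
have D2w1 : (D2 %| w1 * D2)%Z by apply: dvdz_mull.
split.
- rewrite B1'E; have -> : B2 * (beta1 - w1 * D2) - D1 = (B2 * beta1 - D1) - B2 * (w1 * D2) by ring.
  by apply: rpredB; last apply: dvdz_mull.
- rewrite B1'E; have -> : C2 * (beta1 - w1 * D2) + B1 = (C2 * beta1 + B1) - C2 * (w1 * D2) by ring.
  by apply: rpredB; last apply: dvdz_mull.
- rewrite B2'E; have -> : B2 * C1' + (Y1 * D2 - Z1 * B2 - w2 * D1) =
    B2 * (C1' - (Z1 + w2 * beta1)) + w2 * (B2 * beta1 - D1) + Y1 * D2 by ring.
  by apply: rpredD; [apply: rpredD|]; apply: dvdz_mull.
rewrite B2'E; have -> : D1 * C2 * C1' - B1 * (Y1 * D2 - Z1 * B2 - w2 * D1) + D2 =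
  D1 * (C2 * (C1' - (Z1 + w2 * beta1))) + D1 * (w2 * (C2 * beta1 + B1))
  + Z1 * (D1 * C2 + B1 * B2 + C1 * D2) - (Y1 * B1 + Z1 * C1 - 1) * D2 by ring.
apply: rpredB; [apply: rpredD; [apply: rpredD|] | exact: dvdz_mul].
- by apply: dvdz_mul => //; apply: dvdz_mull.
- by apply: dvdz_mul => //; apply: dvdz_mull.
- exact: dvdz_mull.
Qed.

Lemma kl_plucker_reduction : (D2 * D1 %| D2 * C2' + B1' * B2' + C1' * D1)%Z.
Proof.
have p' : (D2 * D1 %| D1 * C2 + B1 * B2 + C1 * D2)%Z by rewrite [D2 * D1]mulrC.
rewrite B1'E B2'E.
have -> : D2 * C2' + (Y2 * D1 - Z2 * B1 - w1 * D2) * (Y1 * D2 - Z1 * B2 - w2 * D1) + C1' * D1 =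
  D2 * (C2' - (Z2 + w1 * (Y1 * D2 - Z1 * B2))) + (C1' - (Z1 + w2 * (Y2 * D1 - Z2 * B1))) * D1
  + D2 * D1 * (w1 * w2 + Y1 * Y2) + Z1 * Z2 * (D1 * C2 + B1 * B2 + C1 * D2)
  - (Z1 * (Y2 * B2 + Z2 * C2 - 1)) * D1 - D2 * (Z2 * (Y1 * B1 + Z1 * C1 - 1)) by ring.
apply: rpredB; [apply: rpredB; [apply: rpredD; [apply: rpredD; [apply: rpredD|]|]|]|].
- exact: dvdz_mul.
- exact: dvdz_mul.
- exact: dvdz_mulr.
- exact: dvdz_mull.
- by apply: dvdz_mul => //; apply: dvdz_mull.
- by apply: dvdz_mul => //; apply: dvdz_mull.
Qed.

Lemma kl_bezout_reduction : exists Y Z, (D2 %| Y * B1' + Z * C1' - 1)%Z.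
Proof.
set beta1 := Y2 * D1 - Z2 * B1.
have [bB bC] := bezout_solve bezout2 (plucker_modr plucker).
have [k1 k1E] := dvdzP bezout1.
(* C1 is a Bezout partner of C1'. *)
exists (- k1 * B2 - C1 * w2 - C2 * Y1), C1; rewrite B1'E.
have -> : (- k1 * B2 - C1 * w2 - C2 * Y1) * (beta1 - w1 * D2) + C1 * C1' - 1 =
  - k1 * (B2 * beta1 - D1) - Y1 * (C2 * beta1 + B1) + C1 * (C1' - (Z1 + w2 * beta1))
  - (- k1 * B2 - C1 * w2 - C2 * Y1) * w1 * D2 + ((Y1 * B1 + Z1 * C1 - 1) - k1 * D1) by ring.
rewrite k1E subrr addr0.
by apply: rpredB; [apply: rpredD; [apply: rpredB|] | ]; apply: dvdz_mull.
Qed.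

End Reduction.

Lemma kl_dual_reduction (D1 D2 B1 C1 B2 C2 Y1 Z1 Y2 Z2 w1 w2 B1' C1' B2' C2' : int) :
  (D1 %| Y1 * B1 + Z1 * C1 - 1)%Z -> (D2 %| Y2 * B2 + Z2 * C2 - 1)%Z ->
  (D1 * D2 %| D1 * C2 + B1 * B2 + C1 * D2)%Z ->
  B1' = (Y2 * D1 - Z2 * B1) - w1 * D2 -> B2' = (Y1 * D2 - Z1 * B2) - w2 * D1 ->
  (D2 %| C1' - (Z1 + w2 * (Y2 * D1 - Z2 * B1)))%Z ->
  (D1 %| C2' - (Z2 + w1 * (Y1 * D2 - Z1 * B2)))%Z ->
  kl_dual D1 D2 B1 C1 B2 C2 B1' C1' B2' C2'.
Proof.
move=> e1 e2 p hB1 hB2 hC1 hC2; split; first exact: kl_half_reduction e1 e2 p hB1 hB2 hC1.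
exact: kl_half_reduction e2 e1 (plucker_swap p) hB2 hB1 hC2.
Qed.

Definition kl_tuple (D1 D2 : nat) := (('I_D1 * 'I_D1) * ('I_D2 * 'I_D2))%type.

Definition kl_index (D1 D2 : nat) (q : kl_tuple D1 D2) : bool :=
  let: ((B1, C1), (B2, C2)) := q in
  [&& coprime3 B1 C1 D1, coprime3 B2 C2 D2 &
      ((D1%:Z * C2%:Z + B1%:Z * B2%:Z + C1%:Z * D2%:Z) == 0 %[mod (D1 * D2)%N%:Z])%Z].

Definition kl_phase (R : realType) (m1 m2 n1 n2 : int) (D1 D2 : nat) (q : kl_tuple D1 D2) :
    R[i] :=
  let: ((B1, C1), (B2, C2)) := q in
  eq_frac R (m1 * B1%:Z + n1 * ((YZ B1 C1).1 * D2%:Z - (YZ B1 C1).2 * B2%:Z)) D1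
  * eq_frac R (m2 * B2%:Z + n2 * ((YZ B2 C2).1 * D1%:Z - (YZ B2 C2).2 * B1%:Z)) D2.

Definition kl_dual_tuple (D1 D2 : nat) (hD1 : (0 < D1)%N) (hD2 : (0 < D2)%N)
    (q : kl_tuple D1 D2) : kl_tuple D2 D1 :=
  let: ((B1, C1), (B2, C2)) := q in
  let beta1 := (YZ B2 C2).1 * D1%:Z - (YZ B2 C2).2 * B1%:Z in
  let beta2 := (YZ B1 C1).1 * D2%:Z - (YZ B1 C1).2 * B2%:Z in
  ((ord_modz hD2 beta1, ord_modz hD2 ((YZ B1 C1).2 + (beta2 %/ D1%:Z)%Z * beta1)),
   (ord_modz hD1 beta2, ord_modz hD1 ((YZ B2 C2).2 + (beta1 %/ D2%:Z)%Z * beta2))).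

Definition kl_dual_rel (D1 D2 : nat) (q : kl_tuple D1 D2) (q' : kl_tuple D2 D1) : Prop :=
  let: ((B1, C1), (B2, C2)) := q in
  let: ((B1', C1'), (B2', C2')) := q' in
  kl_dual D1%:Z D2%:Z B1%:Z C1%:Z B2%:Z C2%:Z B1'%:Z C1'%:Z B2'%:Z C2'%:Z.

Lemma plucker_modE (D1 D2 : nat) (x : int) :
  (x == 0 %[mod (D1 * D2)%N%:Z])%Z = (D1%:Z * D2%:Z %| x)%Z.
Proof. by rewrite eqz_mod_dvd subr0 PoszM. Qed.

Lemma kl_indexP (D1 D2 : nat) (B1 C1 : 'I_D1) (B2 C2 : 'I_D2) :
  kl_index ((B1, C1), (B2, C2)) ->
  [/\ (D1%:Z %| (YZ B1 C1).1 * B1%:Z + (YZ B1 C1).2 * C1%:Z - 1)%Z,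
      (D2%:Z %| (YZ B2 C2).1 * B2%:Z + (YZ B2 C2).2 * C2%:Z - 1)%Z &
      (D1%:Z * D2%:Z %| D1%:Z * C2%:Z + B1%:Z * B2%:Z + C1%:Z * D2%:Z)%Z].
Proof. by case/and3P=> c1 c2; rewrite plucker_modE; split; rewrite ?YZ_bezout. Qed.

Lemma kl_dual_tuple_spec (D1 D2 : nat) (hD1 : (0 < D1)%N) (hD2 : (0 < D2)%N)
    (q : kl_tuple D1 D2) :
  kl_index q -> kl_dual_rel q (kl_dual_tuple hD1 hD2 q) /\ kl_index (kl_dual_tuple hD1 hD2 q).
Proof.
case: q => [[B1 C1] [B2 C2]] /kl_indexP[e1 e2 p].
set beta1 := (YZ B2 C2).1 * D1%:Z - (YZ B2 C2).2 * B1%:Z.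
set beta2 := (YZ B1 C1).1 * D2%:Z - (YZ B1 C1).2 * B2%:Z.
have hB1 : (ord_modz hD2 beta1)%:Z = beta1 - (beta1 %/ D2%:Z)%Z * D2%:Z by rewrite ord_modzE.
have hB2 : (ord_modz hD1 beta2)%:Z = beta2 - (beta2 %/ D1%:Z)%Z * D1%:Z by rewrite ord_modzE.
have hC1 := dvdz_modz_sub D2%:Z ((YZ B1 C1).2 + (beta2 %/ D1%:Z)%Z * beta1).
have hC2 := dvdz_modz_sub D1%:Z ((YZ B2 C2).2 + (beta1 %/ D2%:Z)%Z * beta2).
rewrite -!ord_modzE in hC1 hC2.
split; first exact: kl_dual_reduction e1 e2 p hB1 hB2 hC1 hC2.
have [Y1' [Z1' e1']] := kl_bezout_reduction e1 e2 p hB1 hC1.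
have [Y2' [Z2' e2']] := kl_bezout_reduction e2 e1 (plucker_swap p) hB2 hC2.
rewrite /kl_index /kl_dual_tuple -/beta1 -/beta2 (coprime3_bezout e1') (coprime3_bezout e2').
rewrite plucker_modE.
exact: kl_plucker_reduction e1 e2 p hB1 hB2 hC1 hC2.
Qed.

Lemma kl_dual_rel_sym (D1 D2 : nat) (q : kl_tuple D1 D2) (q' : kl_tuple D2 D1) :
  kl_dual_rel q q' -> kl_dual_rel q' q.
Proof. by case: q q' => [[? ?] [? ?]] [[? ?] [? ?]]; apply: kl_dual_sym. Qed.

Lemma kl_dual_rel_unique (D1 D2 : nat) (q : kl_tuple D1 D2) (qa qb : kl_tuple D2 D1) :
  kl_index q -> kl_dual_rel q qa -> kl_dual_rel q qb -> qa = qb.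
Proof.
case: q qa qb => [[B1 C1] [B2 C2]] [[B1a C1a] [B2a C2a]] [[B1b C1b] [B2b C2b]].
move=> /kl_indexP[e1 e2 _] [ha1 ha2] [hb1 hb2].
have D1_neq0 : D1%:Z != 0 by rewrite -lt0n (leq_ltn_trans _ (ltn_ord B1)).
have D2_neq0 : D2%:Z != 0 by rewrite -lt0n (leq_ltn_trans _ (ltn_ord B2)).
have eB1 : B1a = B1b by apply: ord_inj_dvdz; apply: kl_half_uniqB e2 ha1 hb1.
have eB2 : B2a = B2b by apply: ord_inj_dvdz; apply: kl_half_uniqB e1 ha2 hb2.
(* The C-components are pinned down only once the B-components agree exactly. *)
rewrite -{}eB1 -{}eB2 in hb1 hb2 *.
have -> : C1a = C1b by apply: ord_inj_dvdz; apply: kl_half_uniqC D1_neq0 e2 ha1 hb1.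
by have -> : C2a = C2b by apply: ord_inj_dvdz; apply: kl_half_uniqC D2_neq0 e1 ha2 hb2.
Qed.

Lemma kl_dual_tupleK (D1 D2 : nat) (hD1 : (0 < D1)%N) (hD2 : (0 < D2)%N)
    (q : kl_tuple D1 D2) :
  kl_index q -> kl_dual_tuple hD2 hD1 (kl_dual_tuple hD1 hD2 q) = q.
Proof.
move=> idx; have [rel idx'] := kl_dual_tuple_spec hD1 hD2 idx.
have [rel' _] := kl_dual_tuple_spec hD2 hD1 idx'.
exact: kl_dual_rel_unique idx' rel' (kl_dual_rel_sym rel).
Qed.

Lemma kl_phase_dual (R : realType) (m1 m2 n1 n2 : int) (D1 D2 : nat)
    (hD1 : (0 < D1)%N) (hD2 : (0 < D2)%N) (q : kl_tuple D1 D2) :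
  kl_index q ->
  kl_phase R m1 m2 n1 n2 q = kl_phase R n2 n1 m2 m1 (kl_dual_tuple hD1 hD2 q).
Proof.
move=> idx; have [rel idx'] := kl_dual_tuple_spec hD1 hD2 idx.
move: (kl_dual_tuple hD1 hD2 q) rel idx' (kl_dual_rel_sym rel).
case: q idx => [[B1 C1] [B2 C2]] /kl_indexP[e1 e2 p] [[B1' C1'] [B2' C2']].
move=> [h1 h2] /kl_indexP[e1' e2' p'] [h1' h2'].
have b1 := kl_half_beta e2 (plucker_modr p) h1.
have b2 := kl_half_beta e1 (plucker_modr (plucker_swap p)) h2.
have b1' := kl_half_beta e2' (plucker_modr p') h1'.
have b2' := kl_half_beta e1' (plucker_modr (plucker_swap p')) h2'.
rewrite /kl_phase mulrC; congr (_ * _); apply: eq_frac_congr => //.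
- set x := _ * D1%:Z - _ in b1; set y := _ * D1%:Z - _ in b2'.
  have -> : m2 * B2%:Z + n2 * x - (n2 * B1'%:Z + m2 * y) = n2 * (x - B1'%:Z) - m2 * (y - B2%:Z)
    by ring.
  by apply: rpredB; apply: dvdz_mull.
- set x := _ * D2%:Z - _ in b2; set y := _ * D2%:Z - _ in b1'.
  have -> : m1 * B1%:Z + n1 * x - (n1 * B2'%:Z + m1 * y) = n1 * (x - B2'%:Z) - m1 * (y - B1%:Z)
    by ring.
  by apply: rpredB; apply: dvdz_mull.
Qed.

Lemma big_reindex_involution (V : Type) (idx : V) (op : Monoid.com_law idx) (I J : finType)
    (P : pred I) (Q : pred J) (f : I -> J) (g : J -> I) (F : I -> V) (G : J -> V) :
  (forall i, P i -> Q (f i)) -> (forall j, Q j -> P (g j)) ->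
  (forall i, P i -> g (f i) = i) -> (forall j, Q j -> f (g j) = j) ->
  (forall i, P i -> F i = G (f i)) ->
  \big[op/idx]_(i | P i) F i = \big[op/idx]_(j | Q j) G j.
Proof.
move=> PQ QP gK fK FG; rewrite (reindex_onto f g fK).
apply: eq_big => // i; apply/idP/andP => [Pi | [Qfi /eqP <-]]; last exact: QP.
by rewrite PQ // gK.
Qed.

Lemma Kl3E (R : realType) (m1 m2 n1 n2 : int) (D1 D2 : nat) :
  Kl3 R m1 m2 n1 n2 D1 D2 = \sum_(q : kl_tuple D1 D2 | kl_index q) kl_phase R m1 m2 n1 n2 q.
Proof.
rewrite /Kl3; under eq_bigr do under eq_bigr do rewrite pair_bigA.
by rewrite 2!pair_bigA [RHS]big_mkcond; apply: eq_bigr => -[[B1 C1] [B2 C2]].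
Qed.

Lemma Kl3_sym (R : realType) (m1 m2 n1 n2 : int) (D1 D2 : nat) :
  (0 < D1)%N -> (0 < D2)%N -> Kl3 R m1 m2 n1 n2 D1 D2 = Kl3 R n2 n1 m2 m1 D2 D1.
Proof.
move=> hD1 hD2; rewrite !Kl3E.
apply: (big_reindex_involution _ (f := kl_dual_tuple hD1 hD2) (g := kl_dual_tuple hD2 hD1)).
- by move=> q /(kl_dual_tuple_spec hD1 hD2)[].
- by move=> q /(kl_dual_tuple_spec hD2 hD1)[].
- exact: kl_dual_tupleK.
- exact: kl_dual_tupleK.
- exact: kl_phase_dual.
Qed.

Unset Implicit Arguments. Set Strict Implicit.

Theorem lemma6 (R : realType) (D1 D2 : nat) (a b u t : int)
  (hD1 : (0 < D1)%N) (hD2 : (0 < D2)%N)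
  (ha : coprimez a D1%:Z) (hb : coprimez b D2%:Z) :
  Shat R a u t b D1 D2 = Shat R b t u a D2 D1.
Proof.
rewrite /Shat mulnC; congr (_ * _).
rewrite exchange_big; apply: eq_bigr => y _; apply: eq_bigr => x _.
by rewrite (Kl3_sym R a _ _ b hD1 hD2) -!mulrA [X in _ * X]mulrC.
Qed.
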